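(* Let $S_1$ be a set with $|S_1| \le k$ satisfying $g(S_1) \ge (1 - 1/e)\max_{S \subseteq V, |S| \le k} g(S)$ (e.g., the output of the classic greedy algorithm), and let $S_2 = \{u,v\}$ with $\mathrm{dist}(u,v) = d_{\max}$, and assume $k \ge 2$. Then $$\max\{f(S_1), f(S_2)\} \ge \frac{e-1}{2e-1}\cdot \mathrm{OPT} \;(\approx 0.387\cdot\mathrm{OPT}).$$
   Context: Let $V$ be a finite set of $n$ points in a metric space with metric $\mathrm{dist}$, and let $d_{\max} = \max_{u,v \in V}\mathrm{dist}(u,v)$. The max-min diversity is $\mathrm{div}(S) = \min_{u,v \in S,\, u \ne v}\mathrm{dist}(u,v)$ if $|S| \ge 2$, and $\mathrm{div}(S) = d_{\max}$ if $|S| \le 1$. Let $g : 2^V \to \mathbb{R}_{\ge 0}$ be a nonnegative monotone submodular function, $\lambda \ge 0$, $k \ge 1$ an integer, and $f(S) = g(S) + \lambda\cdot \mathrm{div}(S)$. $\mathrm{OPT} = \max_{S \subseteq V, |S| \le k} f(S)$. *)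

From HB Require Import structures.
From mathcomp Require Import all_boot all_order all_algebra.
From mathcomp Require Import all_classical all_reals all_analysis.
Set Implicit Arguments. Unset Strict Implicit. Unset Printing Implicit Defensive.
Import Order.TTheory GRing.Theory Num.Theory.
Local Open Scope ring_scope.

Section Defs.
Variables (R : realType) (T : finType).

Definition is_metric (dist : T -> T -> R) : Prop :=
  [/\ forall x, dist x x = 0,
      forall x y, x != y -> 0 < dist x y,
      forall x y, dist x y = dist y x &
      forall x y z, dist x z <= dist x y + dist y z].

(* d_max = max_{u,v} dist(u,v)  (distances are >= 0, so 0 is a neutral start) *)
Definition dmax (dist : T -> T -> R) : R :=
  \big[Num.max/0]_(u : T) \big[Num.max/0]_(v : T) dist u v.

(* max-min diversity: min over distinct pairs of S if |S| >= 2, d_max otherwise.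
   dmax is an upper bound of all distances, so it is a harmless neutral element. *)
Definition div (dist : T -> T -> R) (S : {set T}) : R :=
  if (2 <= #|S|)%N then
    \big[Num.min/dmax dist]_(u in S) \big[Num.min/dmax dist]_(v in S | v != u) dist u v
  else dmax dist.

Definition nonneg_fun (g : {set T} -> R) : Prop := forall A : {set T}, 0 <= g A.
Definition monotone_fun (g : {set T} -> R) : Prop :=
  forall A B : {set T}, A \subset B -> g A <= g B.
Definition submodular (g : {set T} -> R) : Prop :=
  forall A B : {set T}, g (A :|: B) + g (A :&: B) <= g A + g B.

Definition fobj (g : {set T} -> R) (lam : R) (dist : T -> T -> R) (S : {set T}) : R :=
  g S + lam * div dist S.

(* max over S with |S| <= k of h S (h >= 0 and set0 is feasible, so 0 is neutral) *)
Definition maxk (k : nat) (h : {set T} -> R) : R :=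
  \big[Num.max/0]_(S : {set T} | (#|S| <= k)%N) h S.

Definition OPT (g : {set T} -> R) (lam : R) (dist : T -> T -> R) (k : nat) : R :=
  maxk k (fobj g lam dist).
End Defs.

(* Diversity never exceeds d_max, so OPT <= G + lam d_max, where G is the best value of g
   on sets of size at most k. The greedy set S1 collects (1 - 1/e) G and the diametral pair
   S2 collects lam d_max; a convex combination of the two bounds gives the ratio
   c / (1 + c) with c = 1 - 1/e, that is (e - 1) / (2e - 1). *)
From HB Require Import structures.
From mathcomp Require Import all_boot all_order all_algebra.
From mathcomp Require Import all_classical all_reals all_analysis.
From mathcomp Require Import ring.
Set Implicit Arguments. Unset Strict Implicit. Unset Printing Implicit Defensive.
Import Order.TTheory GRing.Theory Num.Theory.
Local Open Scope ring_scope.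

Lemma ratio_of_split_bound (R : realFieldType) (c G L O X : R) :
  O <= G + L -> 0 <= c -> c * G <= X -> L <= X -> c / (1 + c) * O <= X.
Proof.
move=> hO c0 hG hL; have c1 : 0 < 1 + c by rewrite ltr_pwDl.
rewrite mulrAC ler_pdivrMr // mulrDr mulr1.
apply: le_trans (ler_wpM2l c0 hO) _; rewrite mulrDr.
by rewrite lerD // [X * c]mulrC ler_wpM2l.
Qed.

Lemma greedy_ratioE (R : realFieldType) (e : R) :
  e != 0 -> 2 * e - 1 != 0 -> (1 - 1 / e) / (1 + (1 - 1 / e)) = (e - 1) / (2 * e - 1).
Proof. by move=> e0 e1; field; rewrite e0 e1. Qed.

Section Diversity.
Variables (R : realType) (T : finType) (dist : T -> T -> R).

Lemma metric_ge0 : is_metric dist -> forall x y, 0 <= dist x y.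
Proof.
move=> [d0 dpos _ _] x y; case: (eqVneq x y) => [->|xy]; first by rewrite d0.
exact/ltW/dpos.
Qed.

Lemma dist_le_dmax x y : dist x y <= dmax dist.
Proof.
apply: le_trans (le_bigmax _ _ x).
exact: (le_bigmax _ (fun y => dist x y) y).
Qed.

Lemma div_le_dmax S : div dist S <= dmax dist.
Proof.
rewrite /div; case: ifP => // _.
apply: (big_ind (fun d => d <= dmax dist)) => // [a b ha _|x _]; first by rewrite ge_min ha.
apply: (big_ind (fun d => d <= dmax dist)) => // [a b ha _|y _]; first by rewrite ge_min ha.
exact: dist_le_dmax.
Qed.

Lemma dmax_ge0 : 0 <= dmax dist.
Proof. exact: bigmax_ge_id. Qed.

Lemma div_ge0 : is_metric dist -> forall S, 0 <= div dist S.
Proof.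
move=> /metric_ge0 dist_ge0 S; rewrite /div; case: ifP => _; last exact: dmax_ge0.
apply: (big_ind (fun d => 0 <= d)); [exact: dmax_ge0 | | move=> x _].
  by move=> a b ha hb; rewrite le_min ha.
apply: (big_ind (fun d => 0 <= d)); [exact: dmax_ge0 | | by move=> y _].
by move=> a b ha hb; rewrite le_min ha.
Qed.

Lemma div_diametral_pair u v :
  is_metric dist -> dist u v = dmax dist -> div dist [set u; v] = dmax dist.
Proof.
move=> [_ _ dsym _] huv; apply/le_anti; rewrite div_le_dmax /=.
rewrite /div; case: ifP => // _.
apply: (big_ind (fun d => dmax dist <= d)) => // [a b ha hb|x Sx].
  by rewrite le_min ha.
apply: (big_ind (fun d => dmax dist <= d)) => // [a b ha hb|y /andP[Sy yx]].
  by rewrite le_min ha.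
move: Sx Sy yx; rewrite !inE => /orP[]/eqP-> /orP[]/eqP->; rewrite ?eqxx //.
- by rewrite huv.
- by rewrite dsym huv.
Qed.

End Diversity.

Section Objective.
Variables (R : realType) (T : finType).

Lemma le_maxk (k : nat) (h : {set T} -> R) (S : {set T}) : (#|S| <= k)%N -> h S <= maxk k h.
Proof. by move=> Sk; rewrite /maxk (bigD1 S) //= le_max lexx. Qed.

Lemma maxk_ge0 (k : nat) (h : {set T} -> R) : 0 <= maxk k h.
Proof. exact: bigmax_ge_id. Qed.

Variables (dist : T -> T -> R) (g : {set T} -> R) (lam : R).
Hypotheses (metric : is_metric dist) (lam_ge0 : 0 <= lam).

Lemma le_fobj S : g S <= fobj g lam dist S.
Proof. by rewrite /fobj lerDl mulr_ge0 ?div_ge0. Qed.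

Lemma fobj_ge_diversity S : nonneg_fun g -> lam * div dist S <= fobj g lam dist S.
Proof. by move=> gnn; rewrite /fobj lerDr. Qed.

Lemma OPT_le_maxk_dmax k : OPT g lam dist k <= maxk k g + lam * dmax dist.
Proof.
apply: bigmax_le => [|S Sk]; first by rewrite addr_ge0 ?mulr_ge0 ?maxk_ge0 ?dmax_ge0.
by rewrite /fobj lerD ?le_maxk ?ler_wpM2l ?div_le_dmax.
Qed.

End Objective.

Theorem mainTheorem9 (R : realType) (T : finType) (dist : T -> T -> R)
  (g : {set T} -> R) (lam : R) (k : nat) (S1 : {set T}) (u v : T) :
  is_metric dist ->
  nonneg_fun g -> monotone_fun g -> submodular g ->
  0 <= lam ->
  (2 <= k)%N ->
  (#|S1| <= k)%N ->
  (1 - 1 / expR 1) * maxk k g <= g S1 ->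
  dist u v = dmax dist ->
  (expR 1 - 1) / (2 * expR 1 - 1) * OPT g lam dist k
    <= Num.max (fobj g lam dist S1) (fobj g lam dist [set u; v]).
Proof.
move=> metric gnn _ _ lam0 _ _ hS1 huv.
have e_gt1 : 1 < expR 1 :> R by rewrite pexpR_gt1.
have e_neq0 : expR 1 != 0 :> R by rewrite gt_eqF ?(lt_trans ltr01).
have den_neq0 : 2 * expR 1 - 1 != 0 :> R.
  by rewrite gt_eqF // subr_gt0 (lt_trans e_gt1) // mulr_natl mulr2n ltrDr (lt_trans ltr01).
rewrite -greedy_ratioE //.
have hOPT := OPT_le_maxk_dmax dist g lam0 k.
apply: (ratio_of_split_bound hOPT).
- by rewrite subr_ge0 div1r invf_le1 ?ltW // (lt_trans ltr01).
- by rewrite le_max (le_trans hS1) ?le_fobj.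
- rewrite le_max -(div_diametral_pair metric huv).
  by apply/orP; right; apply: fobj_ge_diversity; exact: gnn.
Qed.
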